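(* Let $n\ge2$ and let $X$ be a simple directed graph with vertex set $[n]$. Let $p,q\in[n]$ satisfy: - $p\to q\in E(X)$; - $q\to p\notin E(X)$; - $\{p,q\}$ is sink-equivalent in $X$. Then $$\mathrm{ODP}(X,\mathrm{Path}_n)_{p\to q}=x\cdot\mathrm{ODP}(X-q,\mathrm{Path}_{n-1}),$$ where $X-q$ is the induced subgraph of $X$ on $[n]\setminus\{q\}$.
   Context: $\mathrm{Path}_n$ is the directed graph on $[n]$ with edges $i\to i+1$ for $1\le i\le n-1$. For a simple directed graph $X$, a set $S\subseteq V(X)$ is sink-equivalent if for every $t\notin S$, either $s\to t\in E(X)$ for all $s\in S$, or $s\to t\notin E(X)$ for all $s\in S$. For directed graphs $X,Y$ with $|V(X)|=|V(Y)|$, $\mathrm{DFS}(X,Y)$ has as vertices the bijections $\sigma:V(X)\to V(Y)$. For each $\sigma$ and ordered pair $(a,b)$ of distinct vertices, it has $m_X(a,b)m_Y(\sigma(a),\sigma(b))$ edges from $\sigma$ to $\sigma\circ(a\,b)$, where $m_X(a,b)$ is the number of edges $a\to b$ in $X$. Thus $\mathrm{outdeg}(\sigma)=\sum_{a\ne b}m_X(a,b)m_Y(\sigma(a),\sigma(b))$ and $\mathrm{ODP}(X,Y)=\sum_\sigma x^{\mathrm{outdeg}(\sigma)}$. $\mathrm{ODP}(X,Y)_{a\to b}$ is the sum of $x^{\mathrm{outdeg}(\sigma)}$ over bijections $\sigma$ with $\sigma(a)\to\sigma(b)\in E(Y)$. *)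

From HB Require Import structures.
From mathcomp Require Import all_boot all_order all_algebra.
Set Implicit Arguments. Unset Strict Implicit. Unset Printing Implicit Defensive.
Import GRing.Theory.
Local Open Scope ring_scope.

(* A simple directed graph on a finite vertex type T is a loopless boolean
   relation (at most one edge a -> b, so m_X(a,b) = X a b as 0/1). *)

(* Path_n on [n] = 'I_n (vertex i+1 is ordinal i): edges i -> i+1. *)
Definition Path (n : nat) : rel 'I_n := fun i j => (j : nat) == i.+1.
Arguments Path n : clear implicits.

Definition sink_equiv (T : finType) (X : rel T) (S : {set T}) : Prop :=
  forall t, t \notin S ->
    (forall s, s \in S -> X s t) \/ (forall s, s \in S -> ~~ X s t).

Definition isbij (T U : finType) (f : {ffun T -> U}) : bool :=
  injectiveb f && [forall u, u \in codom f].

Definition outdeg (T U : finType) (X : rel T) (Y : rel U) (f : {ffun T -> U}) : nat :=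
  (\sum_(a : T) \sum_(b : T | a != b) (X a b * Y (f a) (f b)))%N.

Definition ODP (T U : finType) (X : rel T) (Y : rel U) : {poly int} :=
  \sum_(f : {ffun T -> U} | isbij f) 'X^(outdeg X Y f).

Definition ODP_edge (T U : finType) (X : rel T) (Y : rel U) (a b : T) : {poly int} :=
  \sum_(f : {ffun T -> U} | isbij f && Y (f a) (f b)) 'X^(outdeg X Y f).

Definition del_vertex (T : finType) (X : rel T) (q : T) : rel {x : T | x != q} :=
  fun u v => X (val u) (val v).
Arguments del_vertex {T} X q _ _.

(* A bijection sigma onto Path_n with sigma q = sigma p + 1 is the same thing as a
   bijection tau of X - q onto Path_(n-1): delete q from the path order and close
   the gap.  Under this correspondence the only counted edge into q is p -> q; the
   counted edge leaving p for tau is taken over by q for sigma, and it is an edge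
   of X from q exactly when it is one from p, by sink-equivalence of {p, q}.  All
   remaining edges are counted alike, so outdeg sigma = outdeg tau + 1. *)

From mathcomp Require Import all_boot all_order all_algebra zify.
Import GRing.Theory.

Set Implicit Arguments.
Unset Strict Implicit.
Unset Printing Implicit Defensive.

Lemma isbij_injectiveb (T U : finType) (f : {ffun T -> U}) :
  #|U| <= #|T| -> isbij f = injectiveb f.
Proof.
rewrite /isbij => cardUT; case: injectiveP => //= inj.
by apply/forallP => u; apply: inj_card_onto.
Qed.

Lemma outdeg_irreflexive (T U : finType) (X : rel T) (Y : rel U) (f : {ffun T -> U}) :
  irreflexive X -> outdeg X Y f = \sum_a \sum_b X a b * Y (f a) (f b).
Proof.
move=> irrX; apply: eq_bigr => a _; rewrite big_mkcond; apply: eq_bigr => b _.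
by case: eqP => // ->; rewrite irrX.
Qed.

Lemma sink_equiv_pair (T : finType) (X : rel T) (p q t : T) :
  sink_equiv X [set p; q] -> t != p -> t != q -> X q t = X p t.
Proof.
move=> sinkX tp tq; have tpq : t \notin [set p; q] by rewrite !inE negb_or tp tq.
case: (sinkX t tpq) => XS; first by rewrite !XS // !inE eqxx ?orbT.
by rewrite (negPf (XS q _)) ?(negPf (XS p _)) // !inE eqxx ?orbT.
Qed.

Lemma big_split_point (T : finType) (q : T) (F : T -> nat) :
  \sum_a F a = F q + \sum_(u : {x : T | x != q}) F (val u).
Proof.
rewrite (bigD1 q) //=; congr (_ + _).
rewrite (reindex_omap (val : {x : T | x != q} -> T) insub) => [|a aq]; last first.
  by rewrite (insubT (fun x => x != q) aq).
by apply: eq_bigl => u; rewrite (valP u) valK eqxx.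
Qed.

Lemma path_lift_lift m (c a b : 'I_m.+1) :
  Path m.+2 (lift (lift ord0 c) a) (lift (lift ord0 c) b) = (a != c) && Path m.+1 a b.
Proof.
rewrite /Path /= /bump /= -(inj_eq val_inj) /=.
by case: ltnP; case: ltnP => /= *; apply/idP/idP; lia.
Qed.

Lemma path_succ_lift m (c b : 'I_m.+1) :
  Path m.+2 (lift ord0 c) (lift (lift ord0 c) b) = Path m.+1 c b.
Proof. by rewrite /Path /= /bump /=; case: ltnP => /= *; apply/idP/idP; lia. Qed.

Lemma path_lift_succ m (c a : 'I_m.+1) :
  Path m.+2 (lift (lift ord0 c) a) (lift ord0 c) = (a == c).
Proof.
rewrite /Path /= /bump /= -(inj_eq val_inj) /=.
by case: ltnP => /= *; apply/idP/idP; lia.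
Qed.

Section InsertAfter.
Variables (T : finType) (m : nat) (q : T).
Local Notation S := {x : T | x != q}.

Definition extend (i : 'I_m.+2) (g : {ffun S -> 'I_m.+1}) : {ffun T -> 'I_m.+2} :=
  [ffun a => if insub a is Some u then lift i (g u) else i].

Definition contract (f : {ffun T -> 'I_m.+2}) : {ffun S -> 'I_m.+1} :=
  [ffun u => odflt ord0 (unlift (f q) (f (val u)))].

Lemma extend_q i g : extend i g q = i.
Proof. by rewrite ffunE insubF ?eqxx. Qed.

Lemma extend_val i g u : extend i g (val u) = lift i (g u).
Proof. by rewrite ffunE valK. Qed.

Lemma injectiveb_extend i g : injectiveb (extend i g) = injectiveb g.
Proof.
apply/injectiveP/injectiveP => [inj u v | inj a b].
  by move=> guv; apply: val_inj; apply: inj; rewrite !extend_val guv.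
case: (insubP S a) => [u _ <-|/negPn/eqP->]; case: (insubP S b) => [v _ <-|/negPn/eqP->].
- by rewrite !extend_val => /lift_inj/inj->.
- by rewrite extend_val extend_q => /eqP; rewrite lift_eqF.
- by rewrite extend_val extend_q => /eqP; rewrite eq_sym lift_eqF.
- by [].
Qed.

Lemma extendK i : cancel (extend i) contract.
Proof. by move=> g; apply/ffunP => u; rewrite ffunE extend_q extend_val liftK. Qed.

Lemma contractK (f : {ffun T -> 'I_m.+2}) : injective f -> extend (f q) (contract f) = f.
Proof.
move=> inj; apply/ffunP => a.
case: (insubP S a) => [u _ <-|/negPn/eqP->]; last by rewrite extend_q.
rewrite extend_val ffunE.
by have /unlift_some[j -> ->] : f q != f (val u) by rewrite (inj_eq inj) eq_sym (valP u).
Qed.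

Variables (p : T) (pq : p != q).

Definition pS : S := exist _ p pq.

Definition insert_after (tau : {ffun S -> 'I_m.+1}) : {ffun T -> 'I_m.+2} :=
  extend (lift ord0 (tau pS)) tau.

Lemma insert_after_path tau : Path m.+2 (insert_after tau p) (insert_after tau q).
Proof. by rewrite /insert_after extend_q -[p]/(val pS) extend_val path_lift_succ. Qed.

Lemma insert_after_contract (f : {ffun T -> 'I_m.+2}) :
  injective f -> Path m.+2 (f p) (f q) -> insert_after (contract f) = f.
Proof.
move=> inj fpq; rewrite /insert_after; have <- : f q = lift ord0 (contract f pS).
  rewrite ffunE /=; have /unlift_some[j fpE ->] : f q != f p by rewrite (inj_eq inj) eq_sym.
  apply: val_inj; move: fpq; rewrite fpE /Path /= /bump; case: leqP => /= *; lia.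
exact: contractK.
Qed.

Variables (X : rel T).
Hypotheses (irrX : irreflexive X) (Xpq : X p q) (sinkX : sink_equiv X [set p; q]).

Lemma outdeg_insert_after (tau : {ffun S -> 'I_m.+1}) : injective tau ->
  outdeg X (Path m.+2) (insert_after tau) = (outdeg (del_vertex X q) (Path m.+1) tau).+1.
Proof.
move=> inj; set c := tau pS; set sg := insert_after tau.
have sgq : sg q = lift ord0 c := extend_q _ _.
have sgu u : sg (val u) = lift (lift ord0 c) (tau u) := extend_val _ _ _.
have into_q : \sum_(u : S) X (val u) q * Path m.+2 (sg (val u)) (sg q) = 1.
  rewrite (bigD1 pS) // big1 => [|u upS].
    by rewrite sgu sgq path_lift_succ eqxx Xpq.
  by rewrite sgu sgq path_lift_succ (inj_eq inj) (negPf upS) muln0.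
have out_q : \sum_(v : S) X q (val v) * Path m.+2 (sg q) (sg (val v)) =
    \sum_(v : S) del_vertex X q pS v * Path m.+1 c (tau v).
  apply: eq_bigr => v _; rewrite sgu sgq path_succ_lift.
  case cv: (Path m.+1 c (tau v)); rewrite ?muln0 // !muln1.
  have vpS : v != pS by apply: contraTneq cv => ->; rewrite /Path -/c ltn_eqF.
  by rewrite /del_vertex (sink_equiv_pair (t := val v) sinkX) ?(valP v).
have others : \sum_(u : S) \sum_(v : S) X (val u) (val v) * Path m.+2 (sg (val u)) (sg (val v)) =
    \sum_(u : S | u != pS) \sum_(v : S) del_vertex X q u v * Path m.+1 (tau u) (tau v).
  rewrite [RHS]big_mkcond; apply: eq_bigr => u _; case: (eqVneq u pS) => [->|upS].
    by rewrite big1 // => v _; rewrite !sgu path_lift_lift eqxx muln0.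
  by apply: eq_bigr => v _; rewrite !sgu path_lift_lift (inj_eq inj) upS.
rewrite !outdeg_irreflexive //; last by move=> u; apply: irrX.
rewrite (big_split_point q) (big_split_point q) irrX add0n.
rewrite [L in _ + L](eq_bigr _ (fun u _ => big_split_point q _)).
by rewrite big_split /= into_q out_q others [in RHS](bigD1 pS) // add1n addnS.
Qed.

Hypothesis cardT : #|T| = m.+2.

Lemma ODP_edge_insert_after :
  ODP_edge X (Path m.+2) p q =
  (\sum_(tau : {ffun S -> 'I_m.+1} | injectiveb tau)
     'X^(outdeg X (Path m.+2) (insert_after tau)))%R.
Proof.
pose P (f : {ffun T -> 'I_m.+2}) := injectiveb f && Path m.+2 (f p) (f q).
rewrite /ODP_edge (eq_bigl P) => [|f]; last first.
  by rewrite isbij_injectiveb // cardT card_ord.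
rewrite (reindex insert_after) => [|]; last first.
  exists contract => [tau _|f]; first exact: extendK.
  by rewrite inE => /andP[/injectiveP inj fpq]; apply: insert_after_contract.
by apply: eq_bigl => tau; rewrite /P insert_after_path andbT; apply: injectiveb_extend.
Qed.

Lemma ODP_edge_succ :
  ODP_edge X (Path m.+2) p q = ('X * ODP (del_vertex X q) (Path m.+1))%R.
Proof.
rewrite ODP_edge_insert_after /ODP big_distrr.
apply: eq_big => [tau|tau /injectiveP inj]; last by rewrite outdeg_insert_after // exprS.
by rewrite isbij_injectiveb // card_sig cardC1 cardT !card_ord.
Qed.

End InsertAfter.

Local Open Scope ring_scope.

Theorem mainTheorem11 (n : nat) (X : rel 'I_n) (p q : 'I_n) :
  (2 <= n)%N ->
  irreflexive X ->
  X p q ->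
  ~~ X q p ->
  sink_equiv X [set p; q] ->
  ODP_edge X (Path n) p q = 'X * ODP (del_vertex X q) (Path n.-1).
Proof.
case: n X p q => [|[|m]] X p q //= _ irrX Xpq _ sinkX.
have pq : p != q by apply: contraTneq Xpq => ->; rewrite irrX.
by apply: (ODP_edge_succ pq) => //; rewrite card_ord.
Qed.
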